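(* Let $m\ge3$ and $2\le t\le m-1$. The hypergraph PIN model on the complete $t$-uniform hypergraph $K_{m,t}$ is strict Type $\mathcal S$.
   Context: Let $\mathcal M=\{1,\dots,m\}$. A hypergraph PIN model on $\mathcal H=(\mathcal M,\mathcal E)$, with $\mathcal E$ a finite multiset of subsets of $\mathcal M$, is defined as follows. Let $\mathcal E^{(n)}$ contain $n$ copies of each element of $\mathcal E$. Independent Bernoulli(1/2) variables $\xi_e$ are attached to the $e\in\mathcal E^{(n)}$, and $X^n_i=(\xi_e:e\in\mathcal E^{(n)},\ i\in e)$; the single-letter source $X_{\mathcal M}$ is the case $n=1$. $K_{m,t}=(\mathcal M,\mathcal E)$ is the hypergraph in which $\mathcal E$ contains exactly one copy of every $t$-element subset of $\mathcal M$. $\Delta(\mathcal P)=\frac1{|\mathcal P|-1}[\sum_{A\in\mathcal P}H(X_A)-H(X_{\mathcal M})]$ for partitions of $\mathcal M$ with at least 2 cells, where $X_A=(X_i:i\in A)$. The source is strict Type $\mathcal S$ if the singleton partition $\{\{1\},\dots,\{m\}\}$ is the unique minimizer of $\Delta$. *)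

From mathcomp Require Import all_boot.
From Stdlib Require Import Reals.

Set Implicit Arguments.
Unset Strict Implicit.
Unset Printing Implicit Defensive.

Definition log2 (x : R) : R := (ln x / ln 2)%R.

(* Shannon entropy (in bits) of the random variable f(w), where w is
   uniformly distributed on the finite set Om:
   H = sum_y - p(y) log2 p(y),  p(y) = #{w | f w = y} / #Om,
   with the convention 0 log 0 = 0. *)
Definition entropy (Om Y : finType) (f : Om -> Y) : R :=
  \big[Rplus/0%R]_(y : Y)
     (if #|[set w | f w == y]| == 0%N then 0%R
      else let p := (INR #|[set w | f w == y]| / INR #|Om|)%R in
           (- (p * log2 p))%R).

(* A hypergraph on M = {0,..,m-1} whose edge multiset is given as an
   indexed family: Ed is the (finite) index type of the edge copies and
   edge e is the vertex set of edge copy e.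
   Single-letter PIN source (n = 1): independent uniform bits xi_e,
   i.e. xi : {ffun Ed -> bool} uniformly distributed.
   X_i = (xi_e : i \in e); it is encoded (injectively) as the function
   e |-> (i \in e) && xi_e (coordinates of non-incident edges are padded
   by false).  X_A = (X_i : i \in A), encoded as i |-> X_i for i in A and
   a constant padding otherwise. *)
Definition PIN_Xi (m : nat) (Ed : finType) (edge : Ed -> {set 'I_m})
    (i : 'I_m) (xi : {ffun Ed -> bool}) : {ffun Ed -> bool} :=
  [ffun e => (i \in edge e) && xi e].

Definition PIN_XA (m : nat) (Ed : finType) (edge : Ed -> {set 'I_m})
    (A : {set 'I_m}) (xi : {ffun Ed -> bool}) : {ffun 'I_m -> {ffun Ed -> bool}} :=
  [ffun i => if i \in A then PIN_Xi edge i xi else [ffun=> false]].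

Definition PIN_H (m : nat) (Ed : finType) (edge : Ed -> {set 'I_m})
    (A : {set 'I_m}) : R :=
  entropy (PIN_XA edge A).

Definition PIN_Delta (m : nat) (Ed : finType) (edge : Ed -> {set 'I_m})
    (P : {set {set 'I_m}}) : R :=
  (((\big[Rplus/0%R]_(A in P) PIN_H edge A) - PIN_H edge [set: 'I_m])
     / INR (#|P| - 1))%R.

Definition admissible_partition (m : nat) (P : {set {set 'I_m}}) : Prop :=
  partition P [set: 'I_m] /\ (1 < #|P|)%N.

Definition singleton_partition (m : nat) : {set {set 'I_m}} :=
  [set [set i] | i : 'I_m].

Definition strict_typeS (m : nat) (Ed : finType) (edge : Ed -> {set 'I_m}) : Prop :=
  admissible_partition (singleton_partition m) /\
  forall P : {set {set 'I_m}}, admissible_partition P ->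
    P <> singleton_partition m ->
    (PIN_Delta edge (singleton_partition m) < PIN_Delta edge P)%R.

Definition Kmt_edges (m t : nat) : finType := {e : {set 'I_m} | #|e| == t}.
Definition Kmt_edge (m t : nat) (e : Kmt_edges m t) : {set 'I_m} := val e.

(* In the PIN model every edge carries an independent fair bit, so H(X_A) is
   the number of edges meeting A.  In K_{m,t} that number is N - C(m - |A|, t),
   where N = C(m, t), hence Delta(P) = N - S(P) / (|P| - 1) with
   S(P) = sum_{A in P} C(m - |A|, t), and Delta is minimised exactly where
   S(P) / (|P| - 1) is maximal.  Since C(x, t) / x = C(x - 1, t - 1) / t grows
   with x, and strictly below m - 1 when t >= 2, every cell satisfies
   (m - 1) C(m - |A|, t) <= (m - |A|) C(m - 1, t); summing over the cells gives
   (m - 1) S(P) <= (|P| - 1) m C(m - 1, t), with equality for the singleton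
   partition and strict inequality as soon as some cell has two elements. *)

From mathcomp Require Import all_boot zify.
From Stdlib Require Import Reals Lra.

Set Implicit Arguments.
Unset Strict Implicit.
Unset Printing Implicit Defensive.

Lemma INR_sum (I : finType) (P : pred I) (F : I -> nat) :
  INR (\sum_(i | P i) F i)%N = \big[Rplus/0%R]_(i | P i) INR (F i).
Proof. exact: (big_morph INR plus_INR). Qed.

Lemma Rsum_mulr (I : finType) (P : pred I) (F : I -> R) (c : R) :
  \big[Rplus/0%R]_(i | P i) (F i * c)%R = (\big[Rplus/0%R]_(i | P i) F i * c)%R.
Proof.
apply: (big_rec2 (fun x y => x = (y * c)%R)); first by rewrite Rmult_0_l.
by move=> i y1 y2 _ ->; rewrite Rmult_plus_distr_r.
Qed.

Lemma INR_expn2 (a : nat) : INR (expn 2 a) = (2 ^ a)%R.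
Proof. by elim: a => [|a IHa] //=; rewrite expnS mult_INR IHa. Qed.

Lemma Rdiv_INR_lt (a b c d : nat) : (0 < b)%N -> (0 < d)%N ->
  (a * d < c * b)%N -> (INR a / INR b < INR c / INR d)%R.
Proof.
move=> /ltP/lt_0_INR b0 /ltP/lt_0_INR d0 /ltP/lt_INR; rewrite !mult_INR => lt_ad_cb.
apply: (Rmult_lt_reg_r (INR b * INR d)); first exact: Rmult_lt_0_compat.
have -> : (INR a / INR b * (INR b * INR d) = INR a * INR d)%R by field; lra.
by have -> : (INR c / INR d * (INR b * INR d) = INR c * INR b)%R by field; lra.
Qed.

Lemma sum_card_fibers (Om Y : finType) (f : Om -> Y) :
  (\sum_(y : Y) #|[set w | f w == y]|)%N = #|Om|.
Proof.
rewrite -sum1_card (partition_big f predT) //=.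
by apply: eq_bigr => y _; rewrite -sum1_card; apply: eq_bigl => w; rewrite inE.
Qed.

Lemma entropy_equal_fibers (Om Y : finType) (f : Om -> Y) (a : nat) :
  (0 < #|Om|)%N ->
  (forall y, #|[set w | f w == y]| != 0%N ->
     (#|[set w | f w == y]| * expn 2 a)%N = #|Om|) ->
  entropy f = INR a.
Proof.
move=> /ltP/lt_0_INR Om0 fibers; rewrite /entropy.
have ln2_gt0 : (0 < ln 2)%R by have := ln_lt_2; lra.
have pow2_gt0 : (0 < 2 ^ a)%R by apply: pow_lt; lra.
rewrite (eq_bigr (fun y => INR #|[set w | f w == y]| * (INR a / INR #|Om|))%R).
  by rewrite Rsum_mulr -INR_sum sum_card_fibers; field; lra.
move=> y _; case: eqP => [-> | /eqP y_hit]; first by rewrite Rmult_0_l.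
have card_y : (0 < INR #|[set w | f w == y]|)%R by apply/lt_0_INR/ltP; rewrite lt0n.
have -> : (INR #|[set w | f w == y]| / INR #|Om| = / 2 ^ a)%R.
  by rewrite -(fibers y y_hit) mult_INR INR_expn2; field; lra.
rewrite /log2 ln_Rinv // ln_pow; last lra.
rewrite -(fibers y y_hit) mult_INR INR_expn2; field; lra.
Qed.

Section PINEntropy.
Variables (m : nat) (Ed : finType) (edge : Ed -> {set 'I_m}).
Implicit Type A : {set 'I_m}.

Lemma meets_edgeP e A :
  reflect (exists i, (i \in edge e) && (i \in A)) (~~ [disjoint edge e & A]).
Proof.
rewrite -setI_eq0; apply: (iffP (set0Pn _)) => -[i].
  by move=> /setIP[ie iA]; exists i; rewrite ie.
by move=> /andP[ie iA]; exists i; apply/setIP.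
Qed.

Lemma eq_PIN_XA A xi xi' :
  (PIN_XA edge A xi == PIN_XA edge A xi') =
  [forall e, ~~ [disjoint edge e & A] ==> (xi e == xi' e)].
Proof.
apply/eqP/forallP => [eqX e | eq_meet].
  apply/implyP => /meets_edgeP[i /andP[ie iA]].
  have := congr1 (fun X : {ffun 'I_m -> {ffun Ed -> bool}} => X i e) eqX.
  by rewrite !ffunE iA !ffunE ie /= => ->.
apply/ffunP => i; rewrite !ffunE; case: ifP => // iA.
apply/ffunP => e; rewrite !ffunE; case ie: (i \in edge e) => //=.
by apply/eqP/(implyP (eq_meet e))/meets_edgeP; exists i; rewrite ie.
Qed.

(* Each fibre of X_A is a translate (under xor) of the bit patterns vanishing
   on the edges meeting A, hence has 2^#{edges missing A} elements. *)
Lemma PIN_H_card_meeting A :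
  PIN_H edge A = INR #|[set e | ~~ [disjoint edge e & A]]|.
Proof.
set D := [set e | [disjoint edge e & A]].
have -> : [set e | ~~ [disjoint edge e & A]] = ~: D by apply/setP => e; rewrite !inE.
apply: entropy_equal_fibers; first by rewrite card_ffun expn_gt0 card_bool.
move=> y; rewrite cards_eq0 => /set0Pn[xi0]; rewrite inE => /eqP <-.
pose shift (xi : {ffun Ed -> bool}) := [ffun e => xi e (+) xi0 e].
have shiftK : involutive shift.
  by move=> xi; apply/ffunP => e; rewrite !ffunE -addbA addbb addbF.
have -> : [set w | PIN_XA edge A w == PIN_XA edge A xi0] =
          shift @^-1: [set g | g \in pffun_on false D [set: bool]].
  apply/setP => xi; rewrite !inE eq_PIN_XA.
  apply/forallP/pffun_onP => [eq_meet | [suppD _] e].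
    split=> [|b _]; last by rewrite inE.
    apply/subsetP => e; rewrite inE ffunE inE; apply: contraR => disj.
    by move/implyP: (eq_meet e) => /(_ disj)/eqP->; rewrite addbb.
  apply/implyP => meet; apply: contraR meet => neq.
  suff : e \in D by rewrite inE.
  by apply: (subsetP suppD); rewrite inE ffunE; case: (xi e) (xi0 e) neq => [] [].
rewrite card_preimset; last exact: inv_inj.
by rewrite cardsE card_pffun_on cardsT card_bool -expnD cardsC card_ffun card_bool.
Qed.

End PINEntropy.

Section Partitions.
Variable T : finType.
Implicit Types (P : {set {set T}}) (A : {set T}).

Lemma partition_singletons :
  (0 < #|T|)%N -> partition [set [set x] | x : T] [set: T].
Proof.
move=> T0; apply/and3P; split.
- rewrite cover_imset; apply/eqP/setP => x; rewrite inE.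
  by apply/bigcupP; exists x; rewrite ?inE.
- apply/trivIsetP => _ _ /imsetP[x _ ->] /imsetP[y _ ->] nxy.
  by rewrite disjoints1 inE; apply: contra nxy => /eqP->.
- by apply/imsetP => -[x _ /esym/eqP]; rewrite -cards_eq0 cards1.
Qed.

Lemma card_singletons : #|[set [set x] | x : T]| = #|T|.
Proof. by rewrite card_imset //; apply: set1_inj. Qed.

Lemma partition_big_cell P :
  partition P [set: T] -> P != [set [set x] | x : T] ->
  exists2 A, A \in P & (2 <= #|A|)%N.
Proof.
move=> /and3P[/eqP covP _ P0] neP; apply/exists_inP; apply: contraR neP.
rewrite negb_exists_in => /forall_inP small.
have cell1 A : A \in P -> exists x, A = [set x].
  move=> AP; apply/cards1P; have := small A AP; rewrite -leqNgt.
  have : (0 < #|A|)%N by rewrite card_gt0; apply: contraNneq P0 => <-.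
  lia.
apply/eqP/setP => A; apply/idP/imsetP => [/cell1[x ->] | [x _ ->]]; first by exists x.
have /bigcupP[B BP xB] : x \in cover P by rewrite covP inE.
by have [y defB] := cell1 B BP; move: xB; rewrite defB inE => /eqP->; rewrite -defB.
Qed.

Lemma partition_cell_proper P D A : partition P D -> (1 < #|P|)%N -> A \in P ->
  (#|A| < #|D|)%N.
Proof.
move=> partP /card_gt1P[X [Y [XP YP nXY]]] AP.
have [B BP nBA] : exists2 B, B \in P & B != A.
  by case: (eqVneq X A) => [<-|]; [exists Y; rewrite // eq_sym | exists X].
move/and3P: partP => [/eqP covP /trivIsetP triv P0].
have /set0Pn[x xB] : B != set0 by apply: contraNneq P0 => <-.
have xA : x \notin A.
  apply: contraL (triv _ _ BP AP nBA) => xA.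
  by rewrite -setI_eq0; apply/set0Pn; exists x; apply/setIP.
rewrite -covP; apply: proper_card; apply/properP; split.
  by apply: bigcup_sup AP.
by exists x => //; apply/bigcupP; exists B.
Qed.

End Partitions.

Lemma ltn_bin2l n1 n2 k : (n1 < n2)%N -> (0 < k <= n2)%N ->
  ('C(n1, k) < 'C(n2, k))%N.
Proof.
case: n2 k => [|n2] [|k] //= lt12 kn2.
by rewrite binS -addn1 leq_add ?leq_bin2l ?bin_gt0.
Qed.

Lemma mul_bin_cross n x k : (k.+1 * (n * 'C(x, k.+1)) = n * x * 'C(x.-1, k))%N.
Proof. by rewrite mulnCA -mul_bin_diag mulnA. Qed.

Lemma leq_bin_ratio n x k : (0 < k)%N -> (x <= n)%N ->
  (n * 'C(x, k) <= x * 'C(n, k))%N.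
Proof.
case: k => // k _ xn; rewrite -(leq_pmul2l (ltn0Sn k)) !mul_bin_cross (mulnC x).
by rewrite leq_mul2l leq_bin2l ?orbT //; lia.
Qed.

Lemma ltn_bin_ratio n x k : (2 <= k <= n)%N -> (0 < x < n)%N ->
  (n * 'C(x, k) < x * 'C(n, k))%N.
Proof.
case: k => // k /andP[k1 kn] /andP[x0 xn].
rewrite -(ltn_pmul2l (ltn0Sn k)) !mul_bin_cross (mulnC x).
by rewrite ltn_pmul2l ?muln_gt0 ?x0 ?ltn_bin2l //; lia.
Qed.

Section CompleteUniformHypergraph.
Variables m t : nat.
Implicit Types (A : {set 'I_m}) (P : {set {set 'I_m}}).

Definition missed_edges P : nat := (\sum_(A in P) 'C(m - #|A|, t))%N.

Lemma card_Kmt_disjoint A :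
  #|[set e : Kmt_edges m t | [disjoint Kmt_edge e & A]]| = 'C(m - #|A|, t).
Proof.
rewrite -(card_imset _ val_inj).
have -> : val @: [set e : Kmt_edges m t | [disjoint Kmt_edge e & A]] =
          [set B : {set 'I_m} | B \subset ~: A & #|B| == t].
  apply/setP => B; rewrite inE -disjoints_subset.
  apply/imsetP/andP => [[e] | [disjB tB]].
    by rewrite inE => disj ->; split=> //; exact: (valP e).
  by exists (exist _ B tB); rewrite ?inE.
by rewrite cards_draws; congr 'C(_, _); have := cardsC A; rewrite card_ord; lia.
Qed.

Lemma card_Kmt_meeting A :
  (#|[set e : Kmt_edges m t | ~~ [disjoint Kmt_edge e & A]]| + 'C(m - #|A|, t) =
   #|Kmt_edges m t|)%N.
Proof.
rewrite -card_Kmt_disjoint -(cardsC [set e | [disjoint Kmt_edge e & A]]) addnC.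
by congr (_ + _)%N; apply: eq_card => e; rewrite !inE.
Qed.

Lemma PIN_Delta_Kmt P : (0 < t)%N -> (1 < #|P|)%N ->
  PIN_Delta (@Kmt_edge m t) P =
  (INR #|Kmt_edges m t| - INR (missed_edges P) / INR (#|P| - 1))%R.
Proof.
move=> t_gt0 P_gt1; set N := #|Kmt_edges m t|.
have H_M : PIN_H (@Kmt_edge m t) [set: 'I_m] = INR N.
  rewrite PIN_H_card_meeting /N -(card_Kmt_meeting [set: 'I_m]).
  by rewrite cardsT card_ord subnn bin0n eqn0Ngt t_gt0 addn0.
have sum_H : (\sum_(A in P) #|[set e : Kmt_edges m t | ~~ [disjoint Kmt_edge e & A]]|
              + missed_edges P = #|P| * N)%N.
  rewrite -big_split -sum_nat_const /=.
  by apply: eq_bigr => A _; rewrite card_Kmt_meeting.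
have b_gt0 : (0 < INR (#|P| - 1))%R by apply/lt_0_INR/ltP; lia.
have := congr1 INR sum_H; rewrite plus_INR mult_INR.
have -> : INR #|P| = (INR (#|P| - 1) + 1)%R by rewrite -S_INR; congr INR; lia.
rewrite /PIN_Delta H_M (eq_bigr _ (fun A _ => PIN_H_card_meeting _ A)) -INR_sum.
set s := INR (\sum_(A in P) _) => sum_H_R.
have -> : s = ((INR (#|P| - 1) + 1) * INR N - INR (missed_edges P))%R by lra.
by field; lra.
Qed.

Lemma missed_edges_singletons :
  missed_edges (singleton_partition m) = (m * 'C(m - 1, t))%N.
Proof.
rewrite /missed_edges -[X in (_ = X * _)%N]card_ord -(card_singletons 'I_m).
rewrite -sum_nat_const.
by apply: eq_bigr => _ /imsetP[i _ ->]; rewrite cards1.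
Qed.

Lemma missed_edges_lt P : (2 <= t <= m - 1)%N ->
  partition P [set: 'I_m] -> (1 < #|P|)%N -> P != singleton_partition m ->
  (missed_edges P * (m - 1) < m * 'C(m - 1, t) * (#|P| - 1))%N.
Proof.
move=> t_range partP P_gt1 neP.
have [A0 A0P A0_gt1] := partition_big_cell partP neP.
have := partition_cell_proper partP P_gt1 A0P; rewrite cardsT card_ord => A0_ltm.
have A0_range : (0 < m - #|A0| < m - 1)%N by lia.
have cell_range A : A \in P -> (m - #|A| <= m - 1)%N.
  move/and3P: partP => [_ _ P0] AP.
  have : (0 < #|A|)%N by rewrite card_gt0; apply: contraNneq P0 => <-.
  lia.
have sum_co_cells : (\sum_(A in P) (m - #|A|) = m * (#|P| - 1))%N.
  have := card_partition partP; rewrite cardsT card_ord => m_sum.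
  have : (\sum_(A in P) (m - #|A|) + \sum_(A in P) #|A| = #|P| * m)%N.
    rewrite -big_split -sum_nat_const; apply: eq_bigr => A _.
    by rewrite /= subnK // -[X in (_ <= X)%N]card_ord max_card.
  by rewrite -m_sum mulnBr muln1 mulnC; lia.
rewrite mulnAC -sum_co_cells /missed_edges !big_distrl /=.
rewrite (bigD1 A0) //= [X in (_ < X)%N](bigD1 A0) //= -addSn.
apply: leq_add; first by rewrite [_ * (m - 1)]mulnC ltn_bin_ratio.
apply: leq_sum => A /andP[AP _]; rewrite [_ * (m - 1)]mulnC.
by apply: leq_bin_ratio (cell_range A AP); case/andP: t_range => /ltnW.
Qed.

End CompleteUniformHypergraph.

Theorem corollary3 (m t : nat) (hm : (3 <= m)%N) (ht : (2 <= t <= m - 1)%N) :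
  strict_typeS (@Kmt_edge m t).
Proof.
have t_gt0 : (0 < t)%N by lia.
have singleton_adm : admissible_partition (singleton_partition m).
  by split; [apply: partition_singletons | rewrite card_singletons]; rewrite card_ord; lia.
split=> // P [partP P_gt1] neP.
have [_ single_gt1] := singleton_adm.
rewrite !PIN_Delta_Kmt // card_singletons card_ord missed_edges_singletons.
apply/Rplus_lt_compat_l/Ropp_lt_contravar/Rdiv_INR_lt; try lia.
exact: missed_edges_lt (introN eqP neP).
Qed.
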